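(* Let $G$ be a finite connected graph, fix an arbitrary orientation $\varepsilon$ of $G$ (the normal orientation) and a total order on $E(G)$. Then every Eulerian equivalence class of $\mathcal{BO}(G)$ contains exactly one reduced orientation.
   Context: An orientation assigns a direction to each edge. $\mathcal{BO}(G)$ is the set of orientations of $G$ with no nonempty directed cut, i.e. (for connected $G$) the totally cyclic orientations, in which every edge lies on a directed cycle. Two orientations $\varepsilon_1,\varepsilon_2$ are Eulerian equivalent if the spanning subgraph formed by the edges $\{e:\varepsilon_1(e)\neq\varepsilon_2(e)\}$, oriented by $\varepsilon_1$, has in-degree equal to out-degree at every vertex. Given the normal orientation $\varepsilon$ and the total order, an orientation $\varepsilon'$ is reduced if for every edge $e$, either $\varepsilon'(e)=\varepsilon(e)$, or there is no cycle that is directed with respect to $\varepsilon'$, contains $e$, and has all its other edges smaller than $e$. *)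

From mathcomp Require Import all_boot.
Set Implicit Arguments. Unset Strict Implicit. Unset Printing Implicit Defensive.

(* The pair (src e, tgt e) records the fixed "normal"
   orientation epsilon: epsilon directs e from src e to tgt e.
   An orientation is o : {ffun E -> bool}; o e = true means o e agrees with
   epsilon (e directed src -> tgt), o e = false means reversed. *)

Section Graph.
Variables (V E : finType) (src tgt : E -> V).

Definition otail (o : {ffun E -> bool}) (e : E) : V := if o e then src e else tgt e.
Definition ohead (o : {ffun E -> bool}) (e : E) : V := if o e then tgt e else src e.

Definition adj : rel V := fun x y =>
  [exists e, ((src e == x) && (tgt e == y)) || ((src e == y) && (tgt e == x))].

Definition connected_graph : Prop := forall x y : V, connect adj x y.

Definition directed_cut (o : {ffun E -> bool}) (S : {set V}) : bool :=
  [exists e, (otail o e \in S) && (ohead o e \notin S)] &&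
  [forall e, ~~ ((otail o e \notin S) && (ohead o e \in S))].

Definition in_BO (o : {ffun E -> bool}) : Prop := forall S : {set V}, ~~ directed_cut o S.

Definition euler_equiv (o1 o2 : {ffun E -> bool}) : Prop :=
  forall v : V,
    #|[set e | (o1 e != o2 e) && (otail o1 e == v)]| =
    #|[set e | (o1 e != o2 e) && (ohead o1 e == v)]|.

Definition directed_cycle (o : {ffun E -> bool}) (c : seq E) : bool :=
  [&& c != [::], uniq c, uniq (map (otail o) c)
    & cycle (fun e f => ohead o e == otail o f) c].

(* reduced w.r.t. the total order on E given by an injective rank : E -> nat *)
Definition reduced (rank : E -> nat) (o : {ffun E -> bool}) : Prop :=
  forall e : E, o e = true \/
    ~ (exists c : seq E, [/\ directed_cycle o c, e \in c &
                             forall f, f \in c -> f != e -> rank f < rank e]).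
End Graph.

From Pilot Require Import Defs.
From mathcomp Require Import all_boot.
From Stdlib Require Import Classical.
Set Implicit Arguments. Unset Strict Implicit. Unset Printing Implicit Defensive.

(* Existence: reversing a directed cycle whose largest edge e is reversed
   (w.r.t. the normal orientation) strictly increases the potential
   sum_{f agrees with normal} 2^rank f, which is bounded, so iterating stops
   at a reduced orientation.  Uniqueness: if two equivalent reduced
   orientations differ, the largest differing edge lies on a directed cycle
   made of differing edges, in the one where it is reversed, contradicting
   reducedness. *)

Lemma card_split (T : finType) (P Q : pred T) :
  #|[set x | P x]| = #|[set x | P x && Q x]| + #|[set x | P x && ~~ Q x]|.
Proof.
rewrite -(cardsID [set x | Q x]).
by congr (_ + _); apply: eq_card => x; rewrite !inE // andbC.
Qed.

Lemma card_preimset (T U : finType) (P : pred T) (g : T -> U) (S : {set U}) :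
  #|[set x | P x && (g x \in S)]| = \sum_(u in S) #|[set x | P x && (g x == u)]|.
Proof.
rewrite -sum1_card (partition_big g (mem S)) /=; last by move=> x; rewrite inE => /andP[].
apply: eq_bigr => u uS; rewrite -sum1_card; apply: eq_bigl => x; rewrite !inE.
by case: eqP => [->|_]; rewrite ?uS ?andbT ?andbF.
Qed.

Lemma card_mem_count (T : finType) (c : seq T) (P : pred T) :
  uniq c -> #|[set x | (x \in c) && P x]| = count P c.
Proof.
move=> uc; rewrite -size_filter.
have /card_uniqP <- := filter_uniq P uc.
by apply: eq_card => x; rewrite inE mem_filter andbC.
Qed.

Section Orientations.
Variables (V E : finType) (src tgt : E -> V).
Implicit Types (o : {ffun E -> bool}) (d : pred E) (S : {set V}) (v : V).

(* Tail and head of an edge under o (qualified: seq also defines ohead). *)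
Local Notation otl := (otail src tgt).
Local Notation ohd := (Defs.ohead src tgt).

Definition outdeg o v := #|[set f | otl o f == v]|.

(* Edges where o1, o2 differ leave v in o2 exactly when they enter v in o1. *)
Lemma outdeg_split o1 o2 v :
  outdeg o1 v = #|[set f | (o1 f != o2 f) && (otl o1 f == v)]|
                + #|[set f | (o1 f == o2 f) && (otl o1 f == v)]| /\
  outdeg o2 v = #|[set f | (o1 f != o2 f) && (ohd o1 f == v)]|
                + #|[set f | (o1 f == o2 f) && (otl o1 f == v)]|.
Proof.
split; rewrite /outdeg (card_split _ (fun f => o1 f != o2 f));
  congr (_ + _); apply: eq_card => f; rewrite !inE /otail /Defs.ohead;
  by case: (o1 f); case: (o2 f); rewrite /= ?andbT ?andbF.
Qed.

Lemma euler_equivE o1 o2 :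
  euler_equiv src tgt o1 o2 <-> forall v, outdeg o1 v = outdeg o2 v.
Proof.
have split_at := outdeg_split o1 o2.
split=> H v; have [Hout1 Hout2] := split_at v.
  by rewrite Hout1 Hout2 H.
apply/eqP; rewrite -(eqn_add2r #|[set f | (o1 f == o2 f) && (otl o1 f == v)]|).
by rewrite -Hout1 -Hout2 H.
Qed.

Lemma euler_equiv_refl o : euler_equiv src tgt o o.
Proof. exact/euler_equivE. Qed.

Lemma euler_equiv_sym o1 o2 :
  euler_equiv src tgt o1 o2 -> euler_equiv src tgt o2 o1.
Proof. by move/euler_equivE=> H; apply/euler_equivE=> v; rewrite H. Qed.

Lemma euler_equiv_trans o1 o2 o3 :
  euler_equiv src tgt o1 o2 -> euler_equiv src tgt o2 o3 -> euler_equiv src tgt o1 o3.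
Proof. by move=> /euler_equivE H1 /euler_equivE H2; apply/euler_equivE=> v; rewrite H1 H2. Qed.

(* d is balanced for o: inside d, in-degree equals out-degree everywhere.
   By definition, o1 ~ o2 says that the edges where they differ are balanced
   for o1. *)
Definition balanced o d : Prop :=
  forall v, #|[set f | d f && (otl o f == v)]| = #|[set f | d f && (ohd o f == v)]|.

Lemma balanced_cut o d S : balanced o d ->
  #|[set f | d f && (otl o f \in S) && (ohd o f \notin S)]| =
  #|[set f | d f && (otl o f \notin S) && (ohd o f \in S)]|.
Proof.
move=> Hbal.
have Hcount : #|[set f | d f && (otl o f \in S)]| = #|[set f | d f && (ohd o f \in S)]|.
  by rewrite !card_preimset; apply: eq_bigr => v _; apply: Hbal.
move: Hcount; rewrite (card_split _ (fun f => ohd o f \in S))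
  [in RHS](card_split _ (fun f => otl o f \in S)).
have -> : #|[set f | d f && (ohd o f \in S) && (otl o f \in S)]| =
          #|[set f | d f && (otl o f \in S) && (ohd o f \in S)]|.
  by apply: eq_card => f; rewrite !inE andbAC.
by move/addnI => ->; apply: eq_card => f; rewrite !inE andbAC.
Qed.

Definition out_cut o S := #|[set f | (otl o f \in S) && (ohd o f \notin S)]|.

(* Equivalent orientations have the same cut sizes: on the differing edges,
   leaving S for o' means entering S for o, which balances leaving S for o. *)
Lemma out_cut_euler_equiv o o' S :
  euler_equiv src tgt o o' -> out_cut o' S = out_cut o S.
Proof.
move=> Hequiv; rewrite /out_cut [LHS](card_split _ (fun f => o f != o' f))
  [RHS](card_split _ (fun f => o f != o' f)).
congr (_ + _); last first.
  apply: eq_card => f; rewrite !inE /otail /Defs.ohead.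
  by case: (o f); case: (o' f); rewrite ?andbF.
transitivity #|[set f | (o f != o' f) && (otl o f \notin S) && (ohd o f \in S)]|.
  apply: eq_card => f; rewrite !inE /otail /Defs.ohead.
  by case: (o f); case: (o' f); case: (src f \in S); case: (tgt f \in S).
rewrite -(balanced_cut S Hequiv); apply: eq_card => f; rewrite !inE.
by case: (o f != o' f); rewrite ?andbF ?andbT.
Qed.

Lemma directed_cutE o S :
  directed_cut src tgt o S = (0 < out_cut o S) && (out_cut o (~: S) == 0).
Proof.
rewrite /directed_cut /out_cut; congr (_ && _).
  by apply/existsP/card_gt0P => -[f Hf]; exists f; rewrite ?inE in Hf *.
rewrite cards_eq0; apply/forallP/eqP => [Hnone|Hempty f].
  by apply/setP => f; rewrite !inE negbK; apply/negbTE/Hnone.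
apply/negP => Hf; suff : f \in set0 by rewrite inE.
by rewrite -Hempty !inE negbK.
Qed.

Lemma in_BO_euler_equiv o o' :
  in_BO src tgt o -> euler_equiv src tgt o o' -> in_BO src tgt o'.
Proof.
move=> HBO Hequiv S.
by rewrite directed_cutE !(out_cut_euler_equiv _ Hequiv) -directed_cutE.
Qed.

Definition chain o : rel E := fun e f => ohd o e == otl o f.

Definition dstep o d : rel V :=
  fun x y => [exists f, [&& d f, otl o f == x & ohd o f == y]].

Lemma lift_path o d x p : path (dstep o d) x p ->
  exists cs : seq E, [/\ all d cs, map (ohd o) cs = p, map (otl o) cs = belast x p &
    forall e0, ohd o e0 = x -> path (chain o) e0 cs].
Proof.
elim: p x => [|y p IH] x /=; first by exists [::].
case/andP => /existsP[f /and3P[df /eqP tf /eqP hf]] /IH[cs [Hd Hh Ht Hp]].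
exists (f :: cs); split => /=; rewrite ?df ?Hd ?hf ?Hh ?tf ?Ht //.
by move=> e0 he0; rewrite /chain he0 tf eqxx /=; apply: Hp.
Qed.

(* Every edge of a balanced set lies on a directed cycle inside the set: the
   vertices reachable from the head of e are closed under d-edges, so by
   balance no d-edge can enter them from outside, and the tail of e is
   reachable; a shortest such walk closes a simple cycle through e. *)
Lemma balanced_cycle o d e : balanced o d -> d e ->
  exists c, [/\ directed_cycle src tgt o c, e \in c & all d c].
Proof.
move=> Hbal de.
pose R := [set y | connect (dstep o d) (ohd o e) y].
have R_closed f : d f -> otl o f \in R -> ohd o f \in R.
  rewrite !inE => df Hc; apply: connect_trans Hc (connect1 _).
  by apply/existsP; exists f; rewrite df !eqxx.
have tailR : otl o e \in R.
  apply/negPn/negP => tnR.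
  have Hcount : #|[set f | d f && (otl o f \in R)]| = #|[set f | d f && (ohd o f \in R)]|.
    by rewrite !card_preimset; apply: eq_bigr => v _; apply: Hbal.
  suff : [set f | d f && (otl o f \in R)] \proper [set f | d f && (ohd o f \in R)].
    by move/proper_card; rewrite Hcount ltnn.
  apply/properP; split.
    apply/subsetP => f; rewrite !inE => /andP[df tf]; rewrite df /=.
    by have := R_closed f df; rewrite !inE; apply.
  by exists e; rewrite !inE de /= ?connect0 //; move: tnR; rewrite inE.
move: tailR; rewrite inE => /connectP[p pp lp].
move: lp; case: (shortenP pp) => p' pp' up' _ lp.
have [cs [Hd Hh Ht Hp]] := lift_path pp'.
have uniq_tails : uniq (otl o e :: belast (ohd o e) p').
  by move: up'; rewrite lastI -lp rcons_uniq => /andP[h1 h2]; rewrite /= h1 h2.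
exists (e :: cs); split; rewrite ?mem_head //= ?de ?Hd //.
apply/and4P; split => //=.
- by move: uniq_tails; rewrite -Ht -(map_cons (otl o)) => /map_uniq.
- by rewrite Ht.
by rewrite rcons_path Hp //= /chain -(last_map (ohd o)) Hh lp eqxx.
Qed.

Lemma cycle_heads_perm o c : cycle (chain o) c ->
  perm_eq (map (ohd o) c) (map (otl o) c).
Proof.
have heads_tails x cs : path (chain o) x cs ->
    map (ohd o) (belast x cs) = map (otl o) cs.
  by elim: cs x => [|y cs IH] x //= /andP[/eqP -> /IH ->].
case: c => [|x cs] // Hc; have := heads_tails _ _ Hc.
by rewrite belast_rcons map_rcons => ->; rewrite perm_rcons.
Qed.

Definition reverse o (c : seq E) : {ffun E -> bool} :=
  [ffun f => if f \in c then ~~ o f else o f].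

Lemma reverse_euler_equiv o c :
  directed_cycle src tgt o c -> euler_equiv src tgt o (reverse o c).
Proof.
case/and4P => _ uc _ cyc v.
have differ f : (o f != reverse o c f) = (f \in c).
  by rewrite ffunE; case: (f \in c); case: (o f).
rewrite (eq_card (B := [set f | (f \in c) && (otl o f == v)])); last first.
  by move=> f; rewrite !inE differ.
rewrite [in RHS](eq_card (B := [set f | (f \in c) && (ohd o f == v)])); last first.
  by move=> f; rewrite !inE differ.
rewrite !card_mem_count // -(count_map (otl o) (pred1 v)) -(count_map (ohd o) (pred1 v)).
by apply/esym/permP; apply: cycle_heads_perm.
Qed.
End Orientations.

Lemma sum_pow2_lt (T : finType) (rank : T -> nat) (P : pred T) (n : nat) :
  injective rank -> (forall x, P x -> rank x < n) -> \sum_(x | P x) 2 ^ rank x < 2 ^ n.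
Proof.
move=> rank_inj; elim: n P => [|n IH] P HP.
  by rewrite big_pred0 // => x; apply/negP => /HP.
rewrite (bigID (fun x => rank x < n)) /= expnS mul2n -addnn -addSn.
apply: leq_add; first by apply: IH => x /andP[].
have top_rank x : P x && ~~ (rank x < n) -> rank x = n.
  by move=> /andP[Px Hx]; apply/eqP; rewrite eqn_leq -ltnS HP //= leqNgt Hx.
case: (pickP (fun x => P x && ~~ (rank x < n))) => [x0 Hx0|Hnone]; last by rewrite big_pred0.
rewrite (bigD1 x0) //= big1 ?addn0 ?(top_rank x0 Hx0) // => x /andP[Hx xne].
by move: xne; rewrite (rank_inj _ _ (etrans (top_rank x Hx) (esym (top_rank x0 Hx0)))) eqxx.
Qed.

Section Reduction.
Variables (V E : finType) (src tgt : E -> V) (rank : E -> nat).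
Hypothesis rank_inj : injective rank.
Implicit Types (o : {ffun E -> bool}).

Definition potential o := \sum_(f | o f) 2 ^ rank f.

Lemma potential_le o : potential o <= \sum_f 2 ^ rank f.
Proof. by rewrite /potential big_mkcond /=; apply: leq_sum => f _; case: (o f). Qed.

Lemma potential_reverse o c e :
  o e = false -> e \in c -> uniq c -> (forall f, f \in c -> f != e -> rank f < rank e) ->
  potential o < potential (reverse o c).
Proof.
move=> oe ec uc Hc; rewrite /potential (bigID (mem c)) [X in _ < X](bigID (mem c)) /=.
have -> : \sum_(f | reverse o c f && (f \notin c)) 2 ^ rank f =
          \sum_(f | o f && (f \notin c)) 2 ^ rank f.
  by apply: eq_bigl => f; rewrite ffunE; case: (f \in c); rewrite ?andbF ?andbT.
rewrite ltn_add2r; apply: (@leq_trans (2 ^ rank e)).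
  apply: sum_pow2_lt => // f /andP[o_f fc]; apply: Hc => //.
  by apply: contraTneq o_f => ->; rewrite oe.
by rewrite (bigD1 e) /= ?leq_addr // ffunE ec oe.
Qed.

Lemma not_reduced_step o : ~ reduced src tgt rank o ->
  exists o', euler_equiv src tgt o o' /\ potential o < potential o'.
Proof.
move=> /not_all_ex_not[e /not_or_and[oe /NNPP[c [dc ec Hc]]]].
exists (reverse o c); split; first exact: reverse_euler_equiv.
apply: potential_reverse ec _ Hc; first by move: oe; case: (o e).
by case/and4P: dc.
Qed.

Lemma exists_reduced o :
  exists o', euler_equiv src tgt o o' /\ reduced src tgt rank o'.
Proof.
pose deficit o := \sum_f 2 ^ rank f - potential o.
have deficit_lt o1 o2 : potential o1 < potential o2 -> deficit o2 < deficit o1.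
  by move=> Hlt; apply: ltn_sub2l (leq_trans Hlt (potential_le _)) Hlt.
have [k Hk] : exists k, deficit o <= k by exists (deficit o).
elim: k o Hk => [|k IH] o Hk;
  have [Hred|/not_reduced_step[o1 [Ho1 Hlt]]] := classic (reduced src tgt rank o).
- by exists o; split => //; apply: euler_equiv_refl.
- by move: (leq_trans (deficit_lt _ _ Hlt) Hk).
- by exists o; split => //; apply: euler_equiv_refl.
have [o2 [Ho2 Hred2]] : exists o2, euler_equiv src tgt o1 o2 /\ reduced src tgt rank o2.
  by apply: IH; rewrite -ltnS; apply: leq_trans (deficit_lt _ _ Hlt) Hk.
by exists o2; split => //; apply: euler_equiv_trans Ho1 Ho2.
Qed.

(* Uniqueness, one side: if o1 ~ o2 and e is the largest edge where they
   differ, then o1 reduced forces e to agree with the normal orientation in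
   o1, since e lies on a directed o1-cycle of differing, hence smaller,
   edges. *)
Lemma reduced_top_difference o1 o2 e :
  euler_equiv src tgt o1 o2 -> reduced src tgt rank o1 -> o1 e != o2 e ->
  (forall f, o1 f != o2 f -> rank f <= rank e) -> o1 e.
Proof.
move=> Hequiv Hred de Hmax.
have [c [dc ec Hdiff]] := balanced_cycle Hequiv de.
case: (Hred e) => // Hno_cycle; exfalso; apply: Hno_cycle.
exists c; split => // f fc fne.
rewrite ltn_neqAle Hmax ?(allP Hdiff f fc) // andbT.
by apply: contra fne => /eqP/rank_inj ->.
Qed.

Lemma reduced_euler_equiv_eq o1 o2 :
  euler_equiv src tgt o1 o2 -> reduced src tgt rank o1 -> reduced src tgt rank o2 ->
  o1 = o2.
Proof.
move=> H12 R1 R2; apply/ffunP => f0; apply/eqP/negPn/negP => hne.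
have [e de Hmax] := @arg_maxnP _ f0 (fun f => o1 f != o2 f) rank hne.
have o1e := reduced_top_difference H12 R1 de Hmax.
have o2e : o2 e.
  apply: reduced_top_difference (euler_equiv_sym H12) R2 _ _; first by rewrite eq_sym.
  by move=> f; rewrite eq_sym; apply: Hmax.
by move: de; rewrite o1e o2e.
Qed.
End Reduction.

Theorem lemma1 (V E : finType) (src tgt : E -> V) (rank : E -> nat)
  (rank_inj : injective rank)
  (Gconn : connected_graph src tgt) :
  forall o : {ffun E -> bool}, in_BO src tgt o ->
    exists! o' : {ffun E -> bool},
      [/\ in_BO src tgt o', euler_equiv src tgt o o' & reduced src tgt rank o'].
Proof.
move=> o HBO.
have [o1 [H1 R1]] := exists_reduced src tgt rank_inj o.
exists o1; split; first by split => //; apply: in_BO_euler_equiv HBO H1.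
move=> o2 [_ H2 R2].
have H12 := euler_equiv_trans (euler_equiv_sym H1) H2.
exact (reduced_euler_equiv_eq rank_inj H12 R1 R2).
Qed.
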